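(* Let $G$ be a group and assume that some finite index subgroup of $G$ embeds in $\mathrm{IET}$. Then $G$ embeds in $\mathrm{IET}$.
   Context: $\mathrm{IET}$ denotes the group of interval exchange transformations of $[0,1)$: bijections of $[0,1)$ that are orientation-preserving piecewise isometries (piecewise translations), left-continuous, with finitely many discontinuity points. *)

From Stdlib Require Import Reals List.
Open Scope R_scope.

Definition is_group {G : Type} (mul : G -> G -> G) (one : G) (inv : G -> G) : Prop :=
  (forall x y z, mul x (mul y z) = mul (mul x y) z) /\
  (forall x, mul one x = x) /\ (forall x, mul x one = x) /\
  (forall x, mul (inv x) x = one) /\ (forall x, mul x (inv x) = one).

Definition is_subgroup {G : Type} (mul : G -> G -> G) (one : G) (inv : G -> G)
  (H : G -> Prop) : Prop :=
  H one /\ (forall x y, H x -> H y -> H (mul x y)) /\ (forall x, H x -> H (inv x)).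

Definition finite_index {G : Type} (mul : G -> G -> G) (inv : G -> G)
  (H : G -> Prop) : Prop :=
  exists reps : list G, forall x : G, exists g, In g reps /\ H (mul (inv g) x).

Definition in01 (x : R) : Prop := 0 <= x < 1.

(* An interval exchange transformation of [0,1), represented as a map R -> R
   that is the identity outside [0,1) (so that IET elements are determined
   by their values on [0,1) and composition is function composition). *)
Definition is_IET (f : R -> R) : Prop :=
  (forall x, ~ in01 x -> f x = x) /\
  (forall x, in01 x -> in01 (f x)) /\
  (forall y, in01 y -> exists x, in01 x /\ f x = y) /\
  (forall x1 x2, in01 x1 -> in01 x2 -> f x1 = f x2 -> x1 = x2) /\
  (exists (n : nat) (a : nat -> R),
      a 0%nat = 0 /\ a n = 1 /\
      (forall i, (i < n)%nat -> a i < a (S i)) /\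
      (forall i, (i < n)%nat -> exists t : R,
         forall x, a i <= x < a (S i) -> f x = x + t)).

Definition embeds_in_IET_on {G : Type} (mul : G -> G -> G) (H : G -> Prop)
  (phi : G -> (R -> R)) : Prop :=
  (forall g, H g -> is_IET (phi g)) /\
  (forall g h, H g -> H h -> phi (mul g h) = (fun x => phi g (phi h x))) /\
  (forall g h, H g -> H h -> phi g = phi h -> g = h).

(* Induce the action from H up to G.  With coset representatives r_0, ..., r_{n-1},
   each g in G permutes the cosets, g r_i = r_{σ_g(i)} h_g(i) with h_g(i) in H.
   Cut [0,1) into n equal blocks and let g move block i onto block σ_g(i), acting
   inside it by a rescaled copy of ψ(h_g(i)).  The cocycle identity
   h_{gk}(i) = h_g(σ_k(i)) h_k(i) makes this a homomorphism, and it is injective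
   because g = r_{σ_g(0)} h_g(0) r_0⁻¹ can be read off the action on the first block. *)

From Stdlib Require Import Reals List Lra Lia ClassicalEpsilon Classical FunctionalExtensionality.
Open Scope R_scope.

Lemma block_index_unique (i j : nat) (u v : R) :
  in01 u -> in01 v -> INR i + u = INR j + v -> i = j.
Proof.
  unfold in01; intros Hu Hv E.
  destruct (Nat.lt_trichotomy i j) as [L|[L|L]]; auto; exfalso;
    apply le_INR in L; rewrite S_INR in L; lra.
Qed.

Lemma block_index_exists (n : nat) (y : R) : 0 <= y < INR n ->
  exists i, (i < n)%nat /\ INR i <= y < INR i + 1.
Proof.
  induction n as [|n IH]; intros Hy.
  - simpl in Hy; lra.
  - rewrite S_INR in Hy. destruct (Rlt_le_dec y (INR n)) as [L|L].
    + destruct IH as (i & Hi & Hy'); [lra|]. exists i; split; [lia|lra].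
    + exists n; split; [lia|lra].
Qed.

Definition block_index (n : nat) (x : R) : nat :=
  epsilon (inhabits 0%nat) (fun i => (i < n)%nat /\ INR i <= x * INR n < INR i + 1).

Definition block_offset (n : nat) (x : R) : R := x * INR n - INR (block_index n x).

Lemma block_index_spec (n : nat) (x : R) : (0 < n)%nat -> in01 x ->
  (block_index n x < n)%nat /\ INR (block_index n x) <= x * INR n < INR (block_index n x) + 1.
Proof.
  unfold block_index, in01; intros Hn Hx. apply epsilon_spec, block_index_exists.
  pose proof (lt_0_INR n Hn). split; nra.
Qed.

Lemma in01_block (n i : nat) (u : R) : (i < n)%nat -> in01 u -> in01 ((INR i + u) / INR n).
Proof.
  unfold in01; intros Hi Hu. pose proof (lt_0_INR n ltac:(lia)).
  assert (Hin : INR (S i) <= INR n) by (apply le_INR; lia). rewrite S_INR in Hin.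
  pose proof (pos_INR i).
  assert (E : (INR i + u) / INR n * INR n = INR i + u) by (field; lra).
  split; nra.
Qed.

Lemma block_decompose (n : nat) (x : R) : (0 < n)%nat -> in01 x ->
  exists i u, (i < n)%nat /\ in01 u /\ x = (INR i + u) / INR n.
Proof.
  intros Hn Hx. destruct (block_index_spec n x Hn Hx) as [Hi Hb].
  exists (block_index n x), (block_offset n x). unfold block_offset, in01.
  split; [exact Hi | split; [lra|]]. pose proof (lt_0_INR n Hn). field. lra.
Qed.

Lemma block_inj (n i j : nat) (u v : R) : (0 < n)%nat -> in01 u -> in01 v ->
  (INR i + u) / INR n = (INR j + v) / INR n -> i = j /\ u = v.
Proof.
  intros Hn Hu Hv E. pose proof (lt_0_INR n Hn).
  assert (E' : INR i + u = INR j + v).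
  { apply (Rmult_eq_reg_r (/ INR n)); [exact E | apply Rinv_neq_0_compat; lra]. }
  pose proof (block_index_unique i j u v Hu Hv E'). subst j. split; [reflexivity | lra].
Qed.

Lemma block_index_offset (n i : nat) (u : R) : (i < n)%nat -> in01 u ->
  block_index n ((INR i + u) / INR n) = i /\ block_offset n ((INR i + u) / INR n) = u.
Proof.
  intros Hi Hu. assert (Hn : (0 < n)%nat) by lia.
  destruct (block_index_spec n _ Hn (in01_block n i u Hi Hu)) as [_ Hb].
  pose proof (lt_0_INR n Hn).
  replace ((INR i + u) / INR n * INR n) with (INR i + u) in Hb by (field; lra).
  assert (Ei : block_index n ((INR i + u) / INR n) = i).
  { set (j := block_index n ((INR i + u) / INR n)) in *.
    symmetry. apply (block_index_unique i j u (INR i + u - INR j)); unfold in01 in *; lra. }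
  split; [exact Ei|]. unfold block_offset. rewrite Ei. field. lra.
Qed.

Definition piecewise_translation (f : R -> R) (lo hi : R) : Prop :=
  exists (m : nat) (a : nat -> R),
    a 0%nat = lo /\ a m = hi /\
    (forall k, (k < m)%nat -> a k < a (S k)) /\
    (forall k, (k < m)%nat -> exists t : R, forall x, a k <= x < a (S k) -> f x = x + t).

Lemma increasing_bounds (m : nat) (a : nat -> R) :
  (forall k, (k < m)%nat -> a k < a (S k)) ->
  forall k, (k <= m)%nat -> a 0%nat <= a k <= a m.
Proof.
  intros Ainc.
  assert (Mono : forall d k, (k + d <= m)%nat -> a k <= a (k + d)%nat).
  { induction d as [|d IH]; intros k Hk.
    - rewrite Nat.add_0_r; lra.
    - pose proof (IH k ltac:(lia)). pose proof (Ainc (k + d)%nat ltac:(lia)).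
      rewrite Nat.add_succ_r; lra. }
  intros k Hk. split.
  - exact (Mono k 0%nat ltac:(lia)).
  - pose proof (Mono (m - k)%nat k ltac:(lia)) as M.
    replace (k + (m - k))%nat with m in M by lia. exact M.
Qed.

Lemma piecewise_translation_trans (f : R -> R) (lo mid hi : R) :
  piecewise_translation f lo mid -> piecewise_translation f mid hi ->
  piecewise_translation f lo hi.
Proof.
  intros (m1 & a & A0 & Am & Ainc & Atr) (m2 & b & B0 & Bm & Binc & Btr).
  pose (c k := if Nat.leb k m1 then a k else b (k - m1)%nat).
  assert (Step : forall k, (k < m1 + m2)%nat ->
    ((k < m1)%nat /\ c k = a k /\ c (S k) = a (S k)) \/
    ((k - m1 < m2)%nat /\ c k = b (k - m1)%nat /\ c (S k) = b (S (k - m1)))).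
  { intros k Hk. unfold c. destruct (Nat.lt_ge_cases k m1) as [L|L].
    - left. rewrite (proj2 (Nat.leb_le k m1)), (proj2 (Nat.leb_le (S k) m1)) by lia. auto.
    - right. rewrite (proj2 (Nat.leb_gt (S k) m1)), Nat.sub_succ_l by lia.
      split; [lia | split; [|reflexivity]].
      destruct (Nat.leb_spec k m1); [|reflexivity].
      replace k with m1 by lia. rewrite Nat.sub_diag. congruence. }
  exists (m1 + m2)%nat, c. repeat split.
  - exact A0.
  - unfold c. destruct (Nat.leb_spec (m1 + m2) m1).
    + replace m2 with 0%nat in * by lia. rewrite Nat.add_0_r. congruence.
    + replace (m1 + m2 - m1)%nat with m2 by lia. exact Bm.
  - intros k Hk. destruct (Step k Hk) as [(L & -> & ->)|(L & -> & ->)]; auto.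
  - intros k Hk. destruct (Step k Hk) as [(L & -> & ->)|(L & -> & ->)]; auto.
Qed.

Lemma piecewise_translation_affine (f g : R -> R) (a b c lo hi : R) : 0 < b ->
  piecewise_translation g lo hi ->
  (forall u, lo <= u < hi -> f (a + b * u) = c + b * g u) ->
  piecewise_translation f (a + b * lo) (a + b * hi).
Proof.
  intros Hb (m & e & E0 & Em & Einc & Etr) Hf.
  exists m, (fun k => a + b * e k). repeat split.
  - rewrite E0; reflexivity.
  - rewrite Em; reflexivity.
  - intros k Hk. specialize (Einc k Hk). nra.
  - intros k Hk. destruct (Etr k Hk) as [t Ht]. exists (c - a + b * t). intros x Hx.
    pose proof (increasing_bounds m e Einc k ltac:(lia)).
    pose proof (increasing_bounds m e Einc (S k) ltac:(lia)).
    set (u := (x - a) / b).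
    assert (Ex : x = a + b * u) by (unfold u; field; lra).
    assert (Hu : e k <= u < e (S k)) by (rewrite Ex in Hx; nra).
    rewrite Ex, Hf, (Ht u Hu) by lra. ring.
Qed.

Definition wreath (n : nat) (s : nat -> nat) (p : nat -> R -> R) (x : R) : R :=
  if excluded_middle_informative (in01 x)
  then (INR (s (block_index n x)) + p (block_index n x) (block_offset n x)) / INR n
  else x.

Lemma wreath_block (n : nat) (s : nat -> nat) (p : nat -> R -> R) (i : nat) (u : R) :
  (i < n)%nat -> in01 u -> wreath n s p ((INR i + u) / INR n) = (INR (s i) + p i u) / INR n.
Proof.
  intros Hi Hu. unfold wreath.
  destruct (excluded_middle_informative _) as [_|Out].
  - destruct (block_index_offset n i u Hi Hu) as [-> ->]. reflexivity.
  - exfalso. exact (Out (in01_block n i u Hi Hu)).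
Qed.

Lemma wreath_out (n : nat) (s : nat -> nat) (p : nat -> R -> R) (x : R) :
  ~ in01 x -> wreath n s p x = x.
Proof.
  intros Out. unfold wreath. destruct (excluded_middle_informative _); tauto.
Qed.

Lemma piecewise_translation_wreath (n : nat) (s : nat -> nat) (p : nat -> R -> R) :
  (0 < n)%nat -> (forall i, (i < n)%nat -> piecewise_translation (p i) 0 1) ->
  piecewise_translation (wreath n s p) 0 1.
Proof.
  intros Hn Hp. pose proof (lt_0_INR n Hn).
  assert (Blocks : forall k, (k <= n)%nat ->
            piecewise_translation (wreath n s p) 0 (INR k / INR n)).
  { induction k as [|k IH]; intros Hk.
    - exists 0%nat, (fun _ => 0). repeat split; intros; simpl; try lia. field. lra.
    - apply piecewise_translation_trans with (INR k / INR n); [apply IH; lia|].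
      assert (Block := piecewise_translation_affine (wreath n s p) (p k)
        (INR k / INR n) (/ INR n) (INR (s k) / INR n) 0 1
        ltac:(apply Rinv_0_lt_compat; lra) (Hp k ltac:(lia))).
      replace (INR k / INR n + / INR n * 0) with (INR k / INR n) in Block by (field; lra).
      replace (INR k / INR n + / INR n * 1) with (INR (S k) / INR n) in Block
        by (rewrite S_INR; field; lra).
      apply Block. intros u Hu.
      replace (INR k / INR n + / INR n * u) with ((INR k + u) / INR n) by (field; lra).
      rewrite wreath_block by (unfold in01; lia || lra). field. lra. }
  pose proof (Blocks n (le_n n)) as All.
  replace (INR n / INR n) with 1 in All by (field; lra). exact All.
Qed.

Lemma is_IET_wreath (n : nat) (s t : nat -> nat) (p : nat -> R -> R) : (0 < n)%nat ->
  (forall i, (i < n)%nat -> (s i < n)%nat) -> (forall j, (j < n)%nat -> (t j < n)%nat) ->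
  (forall i, (i < n)%nat -> t (s i) = i) -> (forall j, (j < n)%nat -> s (t j) = j) ->
  (forall i, (i < n)%nat -> is_IET (p i)) -> is_IET (wreath n s p).
Proof.
  intros Hn Hs Ht Hts Hst Hp.
  split; [|split; [|split; [|split]]].
  - apply wreath_out.
  - intros x Hx. destruct (block_decompose n x Hn Hx) as (i & u & Hi & Hu & ->).
    rewrite wreath_block by assumption. apply in01_block; [auto|].
    apply (Hp i Hi); exact Hu.
  - intros y Hy. destruct (block_decompose n y Hn Hy) as (j & v & Hj & Hv & ->).
    destruct (Hp (t j) (Ht j Hj)) as (_ & _ & Onto & _).
    destruct (Onto v Hv) as (u & Hu & Hpu).
    exists ((INR (t j) + u) / INR n). split; [apply in01_block; auto|].
    rewrite wreath_block, Hpu, Hst by auto. reflexivity.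
  - intros x1 x2 Hx1 Hx2.
    destruct (block_decompose n x1 Hn Hx1) as (i1 & u1 & Hi1 & Hu1 & ->).
    destruct (block_decompose n x2 Hn Hx2) as (i2 & u2 & Hi2 & Hu2 & ->).
    rewrite !wreath_block by assumption. intros E.
    destruct (Hp i1 Hi1) as (_ & Maps1 & _ & Inj1 & _).
    destruct (Hp i2 Hi2) as (_ & Maps2 & _).
    destruct (block_inj n _ _ _ _ Hn (Maps1 u1 Hu1) (Maps2 u2 Hu2) E) as [Es Ep].
    assert (i1 = i2) by (rewrite <- (Hts i1 Hi1), <- (Hts i2 Hi2), Es; reflexivity).
    subst i2. rewrite (Inj1 u1 u2 Hu1 Hu2 Ep). reflexivity.
  - apply piecewise_translation_wreath; [exact Hn|].
    intros i Hi. apply (Hp i Hi).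
Qed.

Lemma wreath_comp (n : nat) (s s' : nat -> nat) (p p' : nat -> R -> R) : (0 < n)%nat ->
  (forall i, (i < n)%nat -> (s' i < n)%nat) ->
  (forall i u, (i < n)%nat -> in01 u -> in01 (p' i u)) ->
  (fun x => wreath n s p (wreath n s' p' x))
  = wreath n (fun i => s (s' i)) (fun i u => p (s' i) (p' i u)).
Proof.
  intros Hn Hs Hp. apply functional_extensionality. intros x.
  destruct (classic (in01 x)) as [Hx|Out].
  - destruct (block_decompose n x Hn Hx) as (i & u & Hi & Hu & ->).
    rewrite !wreath_block by auto. reflexivity.
  - rewrite !(wreath_out n _ _ x Out). reflexivity.
Qed.

Lemma wreath_inj (n : nat) (s s' : nat -> nat) (p p' : nat -> R -> R) (i : nat) :
  (i < n)%nat -> (forall u, in01 u -> in01 (p i u)) -> (forall u, in01 u -> in01 (p' i u)) ->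
  wreath n s p = wreath n s' p' -> s i = s' i /\ forall u, in01 u -> p i u = p' i u.
Proof.
  intros Hi Hp Hp' E.
  assert (Block : forall u, in01 u -> s i = s' i /\ p i u = p' i u).
  { intros u Hu. apply (block_inj n); auto; [lia|].
    rewrite <- (wreath_block n s p i u), <- (wreath_block n s' p' i u), E by assumption.
    reflexivity. }
  split.
  - apply (Block 0). unfold in01; lra.
  - intros u Hu. apply (Block u Hu).
Qed.

Lemma IET_ext (f g : R -> R) : is_IET f -> is_IET g ->
  (forall x, in01 x -> f x = g x) -> f = g.
Proof.
  intros [Fout _] [Gout _] E. apply functional_extensionality. intros x.
  destruct (classic (in01 x)) as [Hx|Out]; [auto|].
  rewrite Fout, Gout by assumption. reflexivity.
Qed.

Section InducedAction.

Context {G : Type} {mul : G -> G -> G} {one : G} {inv : G -> G} {H : G -> Prop}.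
Hypothesis HG : is_group mul one inv.
Hypothesis HH : is_subgroup mul one inv H.

Lemma mul_eq_one_inv (a b : G) : mul a b = one -> b = inv a.
Proof.
  destruct HG as (Assoc & One_l & One_r & Inv_l & _). intros E.
  rewrite <- (One_l b), <- (Inv_l a), <- Assoc, E, One_r. reflexivity.
Qed.

Lemma inv_mul (a b : G) : inv (mul a b) = mul (inv b) (inv a).
Proof.
  destruct HG as (Assoc & One_l & _ & _ & Inv_r).
  symmetry. apply mul_eq_one_inv.
  rewrite <- Assoc, (Assoc b), Inv_r, One_l, Inv_r. reflexivity.
Qed.

Lemma inv_inv (a : G) : inv (inv a) = a.
Proof.
  symmetry. apply mul_eq_one_inv. apply HG.
Qed.

Lemma mul_cancel_l (a b c : G) : mul a b = mul a c -> b = c.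
Proof.
  destruct HG as (Assoc & One_l & _ & Inv_l & _). intros E.
  rewrite <- (One_l b), <- (One_l c), <- (Inv_l a), <- !Assoc, E. reflexivity.
Qed.

Lemma mul_cancel_r (a b c : G) : mul b a = mul c a -> b = c.
Proof.
  destruct HG as (Assoc & _ & One_r & _ & Inv_r). intros E.
  rewrite <- (One_r b), <- (One_r c), <- (Inv_r a), !Assoc, E. reflexivity.
Qed.

Definition same_coset (a b : G) : Prop := H (mul (inv a) b).

Lemma same_coset_refl (a : G) : same_coset a a.
Proof.
  unfold same_coset. rewrite (proj1 (proj2 (proj2 (proj2 HG)))). apply HH.
Qed.

Lemma same_coset_sym (a b : G) : same_coset a b -> same_coset b a.
Proof.
  unfold same_coset. intros Hab. apply HH in Hab.
  rewrite inv_mul, inv_inv in Hab. exact Hab.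
Qed.

Lemma same_coset_trans (a b c : G) : same_coset a b -> same_coset b c -> same_coset a c.
Proof.
  destruct HG as (Assoc & One_l & _ & _ & Inv_r). unfold same_coset. intros Hab Hbc.
  pose proof (proj1 (proj2 HH) _ _ Hab Hbc) as Hac.
  rewrite <- Assoc, (Assoc b), Inv_r, One_l in Hac. exact Hac.
Qed.

Lemma list_transversal (l : list G) : exists (n : nat) (r : nat -> G),
  (forall y, In y l -> exists j, (j < n)%nat /\ same_coset (r j) y) /\
  (forall i j, (i < n)%nat -> (j < n)%nat -> same_coset (r i) (r j) -> i = j).
Proof.
  induction l as [|a l IH].
  - exists 0%nat, (fun _ => one). split; [intros y []|intros; lia].
  - destruct IH as (n & r & Cover & Distinct).
    destruct (classic (exists j, (j < n)%nat /\ same_coset (r j) a)) as [Old|New].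
    + exists n, r. split; [|exact Distinct].
      intros y [<-|Hy]; auto.
    + exists (S n), (fun k => if Nat.eqb k n then a else r k). split.
      * intros y [<-|Hy].
        -- exists n. rewrite Nat.eqb_refl. split; [lia|apply same_coset_refl].
        -- destruct (Cover y Hy) as (j & Hj & Hjy). exists j.
           rewrite (proj2 (Nat.eqb_neq j n)) by lia. auto.
      * intros i j Hi Hj E.
        destruct (Nat.eqb_spec i n) as [->|Ni]; destruct (Nat.eqb_spec j n) as [->|Nj];
          auto; [| |apply Distinct; auto; lia]; exfalso; apply New.
        -- exists j. split; [lia|]. apply same_coset_sym. exact E.
        -- exists i. split; [lia|]. exact E.
Qed.

Lemma finite_index_transversal : finite_index mul inv H ->
  exists (n : nat) (r : nat -> G),
    (forall x, exists j, (j < n)%nat /\ same_coset (r j) x) /\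
    (forall i j, (i < n)%nat -> (j < n)%nat -> same_coset (r i) (r j) -> i = j).
Proof.
  intros [reps Reps]. destruct (list_transversal reps) as (n & r & Cover & Distinct).
  exists n, r. split; [|exact Distinct]. intros x.
  destruct (Reps x) as (g & Hg & Hgx). destruct (Cover g Hg) as (j & Hj & Hjg).
  exists j. split; [exact Hj|]. apply (same_coset_trans _ g); assumption.
Qed.

Section Transversal.

Context {n : nat} {r : nat -> G}.
Hypothesis transversal_cover : forall x, exists j, (j < n)%nat /\ same_coset (r j) x.
Hypothesis transversal_distinct :
  forall i j, (i < n)%nat -> (j < n)%nat -> same_coset (r i) (r j) -> i = j.

Definition coset_index (g : G) (i : nat) : nat :=
  epsilon (inhabits 0%nat) (fun j => (j < n)%nat /\ same_coset (r j) (mul g (r i))).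

Definition cocycle (g : G) (i : nat) : G := mul (inv (r (coset_index g i))) (mul g (r i)).

Lemma coset_index_spec (g : G) (i : nat) :
  (coset_index g i < n)%nat /\ H (cocycle g i).
Proof.
  exact (epsilon_spec (inhabits 0%nat)
    (fun j => (j < n)%nat /\ same_coset (r j) (mul g (r i))) (transversal_cover _)).
Qed.

Lemma coset_index_unique (g : G) (i j : nat) :
  (j < n)%nat -> same_coset (r j) (mul g (r i)) -> coset_index g i = j.
Proof.
  intros Hj Hji. destruct (coset_index_spec g i) as [Hlt Hin].
  apply transversal_distinct; [exact Hlt|exact Hj|].
  apply (same_coset_trans _ (mul g (r i))); [exact Hin|].
  apply same_coset_sym. exact Hji.
Qed.

Lemma coset_index_one (i : nat) : (i < n)%nat -> coset_index one i = i.
Proof.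
  intros Hi. apply coset_index_unique; [exact Hi|].
  rewrite (proj1 (proj2 HG)). apply same_coset_refl.
Qed.

Lemma cocycle_product (g k : G) (i : nat) :
  mul (cocycle g (coset_index k i)) (cocycle k i)
  = mul (inv (r (coset_index g (coset_index k i)))) (mul (mul g k) (r i)).
Proof.
  destruct HG as (Assoc & One_l & _ & _ & Inv_r). unfold cocycle.
  rewrite <- !Assoc, (Assoc (r _)), Inv_r, One_l. reflexivity.
Qed.

Lemma coset_index_mul (g k : G) (i : nat) :
  coset_index (mul g k) i = coset_index g (coset_index k i).
Proof.
  apply coset_index_unique; [apply coset_index_spec|].
  unfold same_coset. rewrite <- cocycle_product.
  apply HH; apply coset_index_spec.
Qed.

Lemma cocycle_mul (g k : G) (i : nat) :
  cocycle (mul g k) i = mul (cocycle g (coset_index k i)) (cocycle k i).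
Proof.
  rewrite cocycle_product. unfold cocycle. rewrite coset_index_mul. reflexivity.
Qed.

Lemma transversal_nonempty : (0 < n)%nat.
Proof. destruct (transversal_cover one) as (j & Hj & _). lia. Qed.

Section Induced.

Context {psi : G -> R -> R}.
Hypothesis psi_embedding : embeds_in_IET_on mul H psi.

Definition induced (g : G) : R -> R :=
  wreath n (coset_index g) (fun i => psi (cocycle g i)).

Lemma cocycle_is_IET (g : G) (i : nat) : is_IET (psi (cocycle g i)).
Proof. apply psi_embedding, coset_index_spec. Qed.

Lemma cocycle_in01 (g : G) (i : nat) (u : R) : in01 u -> in01 (psi (cocycle g i) u).
Proof. apply cocycle_is_IET. Qed.

Lemma induced_is_IET (g : G) : is_IET (induced g).
Proof.
  apply (is_IET_wreath _ _ (coset_index (inv g))); intros.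
  - exact transversal_nonempty.
  - apply coset_index_spec.
  - apply coset_index_spec.
  - rewrite <- coset_index_mul, (proj1 (proj2 (proj2 (proj2 HG)))).
    apply coset_index_one. assumption.
  - rewrite <- coset_index_mul, (proj2 (proj2 (proj2 (proj2 HG)))).
    apply coset_index_one. assumption.

  - apply cocycle_is_IET.
Qed.

Lemma induced_mul (g k : G) : induced (mul g k) = (fun x => induced g (induced k x)).
Proof.
  unfold induced. rewrite wreath_comp.
  - f_equal; apply functional_extensionality; intros i.
    + apply coset_index_mul.
    + rewrite cocycle_mul. apply psi_embedding; apply coset_index_spec.
  - exact transversal_nonempty.
  - intros; apply coset_index_spec.
  - intros; apply cocycle_in01; assumption.
Qed.

Lemma induced_inj (g k : G) : induced g = induced k -> g = k.
Proof.
  intros E.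
  destruct (wreath_inj n _ _ _ _ 0%nat transversal_nonempty
              (cocycle_in01 g 0) (cocycle_in01 k 0) E) as [Eindex Epsi].
  assert (Ecocycle : cocycle g 0 = cocycle k 0).
  { apply psi_embedding; try apply coset_index_spec.
    apply IET_ext; auto using cocycle_is_IET. }
  unfold cocycle in Ecocycle. rewrite Eindex in Ecocycle.
  exact (mul_cancel_r _ _ _ (mul_cancel_l _ _ _ Ecocycle)).
Qed.

Lemma induced_embedding : embeds_in_IET_on mul (fun _ => True) induced.
Proof.
  split; [|split].
  - intros g _. apply induced_is_IET.
  - intros g k _ _. apply induced_mul.
  - intros g k _ _. apply induced_inj.
Qed.

End Induced.
End Transversal.
End InducedAction.

Theorem mainTheorem8 (G : Type) (mul : G -> G -> G) (one : G) (inv : G -> G)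
  (HG : is_group mul one inv) (H : G -> Prop)
  (HH : is_subgroup mul one inv H) (Hfin : finite_index mul inv H)
  (Hemb : exists psi : G -> (R -> R), embeds_in_IET_on mul H psi) :
  exists phi : G -> (R -> R), embeds_in_IET_on mul (fun _ => True) phi.
Proof.
  destruct Hemb as [psi Hpsi].
  destruct (finite_index_transversal HG HH Hfin) as (n & r & Cover & Distinct).
  eexists. exact (induced_embedding HG HH Cover Distinct Hpsi).
Qed.
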